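(* Let $(\mathcal{A},P,\Theta)$ be a combinatorial proto-exact category with duality (admitting finite coproducts, $P$ additive). Let $M_1,M_2$ be symmetric forms in $\mathcal{A}$ and let $i:U\rightarrowtail M_1\oplus M_2$ be isotropic. Then $i$ factors through isotropic inflations $i_k:U_k\rightarrowtail M_k$, $k=1,2$; that is, there is an isomorphism $f:U\to U_1\oplus U_2$ with $(i_1\oplus i_2)\circ f=i$.
   Context: Proto-exact category: pointed category with inflations $\rightarrowtail$ and deflations $\twoheadrightarrow$ (containing isomorphisms, closed under composition, $0\to U$ inflations, $U\to0$ deflations) such that squares with horizontal inflations and vertical deflations are pullbacks iff pushouts, and cospans $W\rightarrowtail X\twoheadleftarrow V$ and spans $W\twoheadleftarrow U\rightarrowtail V$ complete to such biCartesian squares. Duality: functor $P:\mathcal{A}^{op}\to\mathcal{A}$, natural iso $\Theta:\mathrm{id}\Rightarrow PP^{op}$, $P(\Theta_U)\Theta_{P(U)}=\mathrm{id}$; $P$ exact ($P(0)\simeq0$, $\phi$ inflation iff $P(\phi)$ deflation, biCartesian squares preserved and reflected). Symmetric form $(M,\psi_M)$: iso $\psi_M:M\to P(M)$ with $P(\psi_M)\Theta_M=\psi_M$; $(M_1,\psi_1)\oplus(M_2,\psi_2)=(M_1\oplus M_2,\psi_1\oplus\psi_2)$. An inflation $j:U\rightarrowtail M$ is isotropic if $P(j)\psi_Mj=0$ and the induced monomorphism $U\to U^\perp$ is an inflation, where $U^\perp$ is a kernel of $P(j)\psi_M$. $\mathcal{A}$ is combinatorial if it has finite coproducts and for each inflation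 $j:U\rightarrowtail X_1\oplus X_2$ there exist inflations $j_k:U_k\rightarrowtail X_k$ and an isomorphism $f:U\to U_1\oplus U_2$ with $(j_1\oplus j_2)f=j$. *)

Set Implicit Arguments.
Unset Strict Implicit.

Record Cat := {
  Obj :> Type;
  Hom : Obj -> Obj -> Type;
  cid : forall X, Hom X X;
  comp : forall X Y Z, Hom Y Z -> Hom X Y -> Hom X Z;
  comp_assoc : forall X Y Z W (h : Hom Z W) (g : Hom Y Z) (f : Hom X Y),
      comp h (comp g f) = comp (comp h g) f;
  comp_id_l : forall X Y (f : Hom X Y), comp (cid Y) f = f;
  comp_id_r : forall X Y (f : Hom X Y), comp f (cid X) = f
}.
Arguments Hom {c} _ _.
Arguments cid {c} _.
Arguments comp {c X Y Z} _ _.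
Notation "g \o f" := (comp g f) (at level 40, left associativity).

Section Defs.
Variable C : Cat.

Definition is_iso (X Y : C) (f : Hom X Y) : Prop :=
  exists g : Hom Y X, g \o f = cid X /\ f \o g = cid Y.

Record ZeroObj := {
  zobj : C;
  zinit : forall X : C, Hom zobj X;
  zinit_uniq : forall X (f : Hom zobj X), f = zinit X;
  zterm : forall X : C, Hom X zobj;
  zterm_uniq : forall X (f : Hom X zobj), f = zterm X
}.

Variable Z : ZeroObj.
Definition zmor (X Y : C) : Hom X Y := zinit Z Y \o zterm Z X.

(* ---------- Squares
       U --a--> V
       |b       |c
       v        v
       W --d--> X                                       ---------- *)
Definition commutes (U V W X : C) (a : Hom U V) (b : Hom U W)
  (c : Hom V X) (d : Hom W X) : Prop := c \o a = d \o b.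

Definition is_pullback (U V W X : C) (a : Hom U V) (b : Hom U W)
  (c : Hom V X) (d : Hom W X) : Prop :=
  commutes a b c d /\
  forall (T : C) (p : Hom T V) (q : Hom T W), c \o p = d \o q ->
    exists h : Hom T U, (a \o h = p /\ b \o h = q) /\
      forall h' : Hom T U, a \o h' = p -> b \o h' = q -> h' = h.

Definition is_pushout (U V W X : C) (a : Hom U V) (b : Hom U W)
  (c : Hom V X) (d : Hom W X) : Prop :=
  commutes a b c d /\
  forall (T : C) (p : Hom V T) (q : Hom W T), p \o a = q \o b ->
    exists h : Hom X T, (h \o c = p /\ h \o d = q) /\
      forall h' : Hom X T, h' \o c = p -> h' \o d = q -> h' = h.

Definition is_bicartesian (U V W X : C) (a : Hom U V) (b : Hom U W)
  (c : Hom V X) (d : Hom W X) : Prop :=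
  is_pullback a b c d /\ is_pushout a b c d.

Record ProtoExact := {
  infl : forall X Y : C, Hom X Y -> Prop;
  defl : forall X Y : C, Hom X Y -> Prop;
  infl_iso : forall X Y (f : Hom X Y), is_iso f -> infl f;
  defl_iso : forall X Y (f : Hom X Y), is_iso f -> defl f;
  infl_comp : forall X Y W (g : Hom Y W) (f : Hom X Y),
      infl f -> infl g -> infl (g \o f);
  defl_comp : forall X Y W (g : Hom Y W) (f : Hom X Y),
      defl f -> defl g -> defl (g \o f);
  infl_zero : forall X, infl (zinit Z X);
  defl_zero : forall X, defl (zterm Z X);
  pb_iff_po : forall U V W X (a : Hom U V) (b : Hom U W) (c : Hom V X)
      (d : Hom W X), infl a -> infl d -> defl b -> defl c ->
      commutes a b c d -> (is_pullback a b c d <-> is_pushout a b c d);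
  cospan_compl : forall V W X (d : Hom W X) (c : Hom V X),
      infl d -> defl c ->
      exists (U : C) (a : Hom U V) (b : Hom U W),
        infl a /\ defl b /\ is_bicartesian a b c d;
  span_compl : forall U V W (a : Hom U V) (b : Hom U W),
      infl a -> defl b ->
      exists (X : C) (c : Hom V X) (d : Hom W X),
        infl d /\ defl c /\ is_bicartesian a b c d
}.

(* ---------- Binary coproducts (with the zero object: finite coproducts) *)
Record Coproducts := {
  cp : C -> C -> C;
  inj1 : forall X Y, Hom X (cp X Y);
  inj2 : forall X Y, Hom Y (cp X Y);
  copair : forall X Y T, Hom X T -> Hom Y T -> Hom (cp X Y) T;
  copair_inj1 : forall X Y T (f : Hom X T) (g : Hom Y T),
      copair f g \o inj1 X Y = f;
  copair_inj2 : forall X Y T (f : Hom X T) (g : Hom Y T),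
      copair f g \o inj2 X Y = g;
  copair_uniq : forall X Y T (h : Hom (cp X Y) T),
      h = copair (h \o inj1 X Y) (h \o inj2 X Y)
}.

Variable CP : Coproducts.
Local Notation "X (+) Y" := (cp CP X Y) (at level 50).

Definition cpmap (X1 X2 Y1 Y2 : C) (f1 : Hom X1 Y1) (f2 : Hom X2 Y2) :
  Hom (X1 (+) X2) (Y1 (+) Y2) :=
  copair CP (inj1 CP Y1 Y2 \o f1) (inj2 CP Y1 Y2 \o f2).

Definition cproj1 (X1 X2 : C) : Hom (X1 (+) X2) X1 :=
  copair CP (cid X1) (zmor X2 X1).
Definition cproj2 (X1 X2 : C) : Hom (X1 (+) X2) X2 :=
  copair CP (zmor X1 X2) (cid X2).

Record Duality := {
  Pobj : C -> C;
  Phom : forall X Y : C, Hom X Y -> Hom (Pobj Y) (Pobj X);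
  P_id : forall X, Phom (cid X) = cid (Pobj X);
  P_comp : forall X Y W (g : Hom Y W) (f : Hom X Y),
      Phom (g \o f) = Phom f \o Phom g;
  Theta : forall X, Hom X (Pobj (Pobj X));
  Theta_nat : forall X Y (f : Hom X Y),
      Theta Y \o f = Phom (Phom f) \o Theta X;
  Theta_iso : forall X, is_iso (Theta X);
  Theta_coh : forall X, Phom (Theta X) \o Theta (Pobj X) = cid (Pobj X)
}.

Variable E : ProtoExact.
Variable D : Duality.

Definition exact_duality : Prop :=
  (exists f : Hom (Pobj D (zobj Z)) (zobj Z), is_iso f) /\
  (forall X Y (f : Hom X Y), infl E f <-> defl E (Phom D f)) /\
  (forall U V W X (a : Hom U V) (b : Hom U W) (c : Hom V X) (d : Hom W X),
      infl E a -> infl E d -> defl E b -> defl E c -> commutes a b c d ->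
      (is_bicartesian a b c d <->
       is_bicartesian (Phom D c) (Phom D d) (Phom D a) (Phom D b))).

Definition Pcp (X1 X2 : C) :
  Hom (Pobj D X1 (+) Pobj D X2) (Pobj D (X1 (+) X2)) :=
  copair CP (Phom D (cproj1 X1 X2)) (Phom D (cproj2 X1 X2)).

Definition additive_duality : Prop :=
  forall X1 X2 : C, is_iso (Pcp X1 X2).

Definition combinatorial : Prop :=
  forall (U X1 X2 : C) (j : Hom U (X1 (+) X2)), infl E j ->
    exists (U1 U2 : C) (j1 : Hom U1 X1) (j2 : Hom U2 X2)
           (f : Hom U (U1 (+) U2)),
      infl E j1 /\ infl E j2 /\ is_iso f /\ cpmap j1 j2 \o f = j.

Definition symmetric_form (M : C) (psi : Hom M (Pobj D M)) : Prop :=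
  is_iso psi /\ Phom D psi \o Theta D M = psi.

Definition form_sum (M1 M2 : C) (psi1 : Hom M1 (Pobj D M1))
  (psi2 : Hom M2 (Pobj D M2)) : Hom (M1 (+) M2) (Pobj D (M1 (+) M2)) :=
  Pcp M1 M2 \o cpmap psi1 psi2.

Definition is_kernel (K X Y : C) (k : Hom K X) (g : Hom X Y) : Prop :=
  g \o k = zmor K Y /\
  forall (T : C) (t : Hom T X), g \o t = zmor T Y ->
    exists h : Hom T K, k \o h = t /\
      forall h' : Hom T K, k \o h' = t -> h' = h.

Definition isotropic (M : C) (psi : Hom M (Pobj D M)) (U : C)
  (j : Hom U M) : Prop :=
  infl E j /\
  Phom D j \o psi \o j = zmor U (Pobj D U) /\
  exists (Uperp : C) (k : Hom Uperp M) (u : Hom U Uperp),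
    is_kernel k (Phom D j \o psi) /\ k \o u = j /\ infl E u.

End Defs.

Notation "X (+) Y" := (cp _ X Y) (at level 50).


Set Implicit Arguments.
Unset Strict Implicit.

(* U^perp is the kernel of the deflation P(i) psi, hence an inflation into
   M1 (+) M2; the category being combinatorial, it splits as K1 (+) K2 with
   K_k >-> M_k, and splitting U >-> U^perp once more writes i = (i1 (+) i2) f
   with i_k : U_k >-> K_k >-> M_k.  As psi1 (+) psi2 restricts to psi_k on M_k
   and P turns the split epimorphism U -> U_k into a monomorphism, K_k is the
   kernel of P(i_k) psi_k, i.e. U_k^perp, so U_k >-> K_k makes i_k isotropic. *)

Section ProtoExactDuality.

Variable C : Cat.
Variable Z : ZeroObj C.
Variable E : ProtoExact Z.
Variable CP : Coproducts C.
Variable D : Duality C.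

Definition monic (X Y : C) (f : Hom X Y) : Prop :=
  forall (T : C) (p q : Hom T X), f \o p = f \o q -> p = q.

Lemma comp_zmor (X Y W : C) (g : Hom Y W) : g \o zmor Z X Y = zmor Z X W.
Proof. unfold zmor. rewrite comp_assoc. f_equal. apply zinit_uniq. Qed.

Lemma zmor_comp (X Y W : C) (f : Hom W X) : zmor Z X Y \o f = zmor Z W Y.
Proof. unfold zmor. rewrite <- comp_assoc. f_equal. apply zterm_uniq. Qed.

Lemma iso_comp (X Y W : C) (g : Hom Y W) (f : Hom X Y) :
  is_iso f -> is_iso g -> is_iso (g \o f).
Proof.
  intros [f' [Hf'f Hff']] [g' [Hg'g Hgg']]. exists (f' \o g'). split.
  - rewrite comp_assoc, <- (comp_assoc f' g' g), Hg'g, comp_id_r. exact Hf'f.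
  - rewrite comp_assoc, <- (comp_assoc g f f'), Hff', comp_id_r. exact Hgg'.
Qed.

Lemma monic_of_retraction (X Y : C) (s : Hom X Y) (r : Hom Y X) :
  r \o s = cid X -> monic s.
Proof.
  intros Hrs T p q Hpq.
  rewrite <- (comp_id_l p), <- (comp_id_l q), <- Hrs, <- !comp_assoc, Hpq.
  reflexivity.
Qed.

Lemma infl_monic (X Y : C) (a : Hom X Y) : infl E a -> monic a.
Proof.
  intros Ha T p q Hpq.
  destruct (span_compl Ha (defl_zero E X)) as (W & c & d & _ & _ & [[Hcom Hpb] _]).
  red in Hcom.
  assert (Hsq : forall x : Hom T X, c \o (a \o x) = d \o zterm Z T).
  { intros x. rewrite comp_assoc, Hcom, <- comp_assoc, (zterm_uniq (zterm Z X \o x)).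
    reflexivity. }
  destruct (Hpb T (a \o p) (zterm Z T) (Hsq p)) as (h & _ & Huniq).
  rewrite (Huniq p eq_refl (zterm_uniq _)), (Huniq q (eq_sym Hpq) (zterm_uniq _)).
  reflexivity.
Qed.

Lemma kernel_monic (K X Y : C) (k : Hom K X) (Q : Hom X Y) :
  is_kernel Z k Q -> monic k.
Proof.
  intros [Hk0 Hk] T p q Hpq.
  assert (Hp0 : Q \o (k \o p) = zmor Z T Y) by (rewrite comp_assoc, Hk0; apply zmor_comp).
  destruct (Hk T (k \o p) Hp0) as (h & _ & Huniq).
  rewrite (Huniq p eq_refl), (Huniq q (eq_sym Hpq)). reflexivity.
Qed.

Lemma kernel_iso (K K' X Y : C) (k : Hom K X) (k' : Hom K' X) (Q : Hom X Y) :
  is_kernel Z k Q -> is_kernel Z k' Q ->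
  exists phi : Hom K' K, is_iso phi /\ k \o phi = k'.
Proof.
  intros Hk Hk'.
  pose proof (kernel_monic Hk) as Hk_monic.
  pose proof (kernel_monic Hk') as Hk'_monic.
  destruct Hk as [Hk0 Hk], Hk' as [Hk'0 Hk'].
  destruct (Hk K' k' Hk'0) as (phi & Hphi & _).
  destruct (Hk' K k Hk0) as (psi & Hpsi & _).
  exists phi. split; [exists psi; split | exact Hphi].
  - apply Hk'_monic. rewrite comp_assoc, Hpsi, Hphi, comp_id_r. reflexivity.
  - apply Hk_monic. rewrite comp_assoc, Hphi, Hpsi, comp_id_r. reflexivity.
Qed.

Lemma kernel_comp_iso (K K' X Y : C) (k : Hom K X) (g : Hom K' K) (Q : Hom X Y) :
  is_kernel Z k Q -> is_iso g -> is_kernel Z (k \o g) Q.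
Proof.
  intros [Hk0 Hk] [g' [Hg'g Hgg']]. split.
  - rewrite comp_assoc, Hk0. apply zmor_comp.
  - intros T t Ht. destruct (Hk T t Ht) as (x & Hx & Huniq).
    exists (g' \o x). split.
    + rewrite <- comp_assoc, (comp_assoc g g' x), Hgg', comp_id_l. exact Hx.
    + intros h' Hh'.
      rewrite <- (comp_id_l h'), <- Hg'g, <- comp_assoc, (Huniq (g \o h')).
      * reflexivity.
      * rewrite comp_assoc. exact Hh'.
Qed.

Lemma pullback_zero_kernel (K X Y : C) (a : Hom K X) (b : Hom K (zobj Z))
  (Q : Hom X Y) :
  is_pullback a b Q (zinit Z Y) -> is_kernel Z a Q.
Proof.
  intros [Hcom Hpb]. split.
  - red in Hcom. rewrite Hcom, (zterm_uniq b). reflexivity.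
  - intros T t Ht. destruct (Hpb T t (zterm Z T) Ht) as (h & [Hh _] & Huniq).
    exists h. split; [exact Hh |].
    intros h' Hh'. apply Huniq; [exact Hh' | apply zterm_uniq].
Qed.

Lemma kernel_infl (K X Y : C) (k : Hom K X) (Q : Hom X Y) :
  defl E Q -> is_kernel Z k Q -> infl E k.
Proof.
  intros HQ Hk.
  destruct (cospan_compl (infl_zero E Y) HQ) as (K0 & a & b & Ha & _ & [Hpb _]).
  destruct (kernel_iso (pullback_zero_kernel Hpb) Hk) as (phi & Hphi & <-).
  exact (infl_comp (infl_iso E Hphi) Ha).
Qed.

Lemma kernel_summand (K K' X X' Y : C) (Q : Hom X Y) (k : Hom K X)
  (k' : Hom K' X') (sigma : Hom X' X) (rho : Hom X X') (s : Hom K' K)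
  (p : Hom K K') :
  rho \o sigma = cid X' -> monic k' -> k \o s = sigma \o k' -> rho \o k = k' \o p ->
  is_kernel Z k Q -> is_kernel Z k' (Q \o sigma).
Proof.
  intros Hret Hk' Hs Hp [Hk0 Hk]. split.
  - rewrite <- comp_assoc, <- Hs, comp_assoc, Hk0. apply zmor_comp.
  - intros T t Ht.
    assert (Ht' : Q \o (sigma \o t) = zmor Z T Y) by (rewrite comp_assoc; exact Ht).
    destruct (Hk T _ Ht') as (x & Hx & _).
    assert (Hpx : k' \o (p \o x) = t).
    { rewrite comp_assoc, <- Hp, <- comp_assoc, Hx, comp_assoc, Hret. apply comp_id_l. }
    exists (p \o x). split; [exact Hpx |].
    intros h' Hh'. apply Hk'. rewrite Hh', Hpx. reflexivity.
Qed.

Lemma kernel_cancel_monic (K X Y W : C) (k : Hom K X) (Q : Hom X Y) (L : Hom Y W) :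
  monic L -> is_kernel Z k (L \o Q) -> is_kernel Z k Q.
Proof.
  intros HL [Hk0 Hk]. split.
  - apply HL. rewrite comp_assoc, Hk0, comp_zmor. reflexivity.
  - intros T t Ht. apply Hk. rewrite <- comp_assoc, Ht. apply comp_zmor.
Qed.

Lemma copair_ext (X Y T : C) (h h' : Hom (cp CP X Y) T) :
  h \o inj1 CP X Y = h' \o inj1 CP X Y -> h \o inj2 CP X Y = h' \o inj2 CP X Y ->
  h = h'.
Proof. intros H1 H2. rewrite (copair_uniq h), (copair_uniq h'), H1, H2. reflexivity. Qed.

Lemma cpmap_inj1 (X1 X2 Y1 Y2 : C) (f1 : Hom X1 Y1) (f2 : Hom X2 Y2) :
  cpmap CP f1 f2 \o inj1 CP X1 X2 = inj1 CP Y1 Y2 \o f1.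
Proof. apply copair_inj1. Qed.

Lemma cpmap_inj2 (X1 X2 Y1 Y2 : C) (f1 : Hom X1 Y1) (f2 : Hom X2 Y2) :
  cpmap CP f1 f2 \o inj2 CP X1 X2 = inj2 CP Y1 Y2 \o f2.
Proof. apply copair_inj2. Qed.

Lemma cpmap_comp (X1 X2 Y1 Y2 W1 W2 : C) (f1 : Hom Y1 W1) (f2 : Hom Y2 W2)
  (g1 : Hom X1 Y1) (g2 : Hom X2 Y2) :
  cpmap CP f1 f2 \o cpmap CP g1 g2 = cpmap CP (f1 \o g1) (f2 \o g2).
Proof.
  apply copair_ext.
  - rewrite <- comp_assoc, !cpmap_inj1, comp_assoc, cpmap_inj1, comp_assoc. reflexivity.
  - rewrite <- comp_assoc, !cpmap_inj2, comp_assoc, cpmap_inj2, comp_assoc. reflexivity.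
Qed.

Lemma cpmap_id (X1 X2 : C) : cpmap CP (cid X1) (cid X2) = cid (cp CP X1 X2).
Proof.
  apply copair_ext.
  - rewrite cpmap_inj1, comp_id_l, comp_id_r. reflexivity.
  - rewrite cpmap_inj2, comp_id_l, comp_id_r. reflexivity.
Qed.

Lemma cpmap_iso (X1 X2 Y1 Y2 : C) (f1 : Hom X1 Y1) (f2 : Hom X2 Y2) :
  is_iso f1 -> is_iso f2 -> is_iso (cpmap CP f1 f2).
Proof.
  intros [g1 [H1 H1']] [g2 [H2 H2']]. exists (cpmap CP g1 g2).
  rewrite !cpmap_comp, H1, H1', H2, H2', !cpmap_id. split; reflexivity.
Qed.

Lemma cproj1_inj1 (X1 X2 : C) : cproj1 Z CP X1 X2 \o inj1 CP X1 X2 = cid X1.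
Proof. apply copair_inj1. Qed.

Lemma cproj2_inj2 (X1 X2 : C) : cproj2 Z CP X1 X2 \o inj2 CP X1 X2 = cid X2.
Proof. apply copair_inj2. Qed.

Lemma cproj1_cpmap (X1 X2 Y1 Y2 : C) (f1 : Hom X1 Y1) (f2 : Hom X2 Y2) :
  cproj1 Z CP Y1 Y2 \o cpmap CP f1 f2 = f1 \o cproj1 Z CP X1 X2.
Proof.
  apply copair_ext.
  - rewrite <- !comp_assoc, cpmap_inj1, cproj1_inj1, comp_assoc, cproj1_inj1.
    rewrite comp_id_l, comp_id_r. reflexivity.
  - rewrite <- !comp_assoc, cpmap_inj2, comp_assoc. unfold cproj1.
    rewrite !copair_inj2, zmor_comp, comp_zmor. reflexivity.
Qed.

Lemma cproj2_cpmap (X1 X2 Y1 Y2 : C) (f1 : Hom X1 Y1) (f2 : Hom X2 Y2) :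
  cproj2 Z CP Y1 Y2 \o cpmap CP f1 f2 = f2 \o cproj2 Z CP X1 X2.
Proof.
  apply copair_ext.
  - rewrite <- !comp_assoc, cpmap_inj1, comp_assoc. unfold cproj2.
    rewrite !copair_inj1, zmor_comp, comp_zmor. reflexivity.
  - rewrite <- !comp_assoc, cpmap_inj2, cproj2_inj2, comp_assoc, cproj2_inj2.
    rewrite comp_id_l, comp_id_r. reflexivity.
Qed.

Lemma form_sum_inj1 (M1 M2 : C) (psi1 : Hom M1 (Pobj D M1))
  (psi2 : Hom M2 (Pobj D M2)) :
  form_sum Z CP psi1 psi2 \o inj1 CP M1 M2 = Phom D (cproj1 Z CP M1 M2) \o psi1.
Proof.
  unfold form_sum. rewrite <- comp_assoc, cpmap_inj1, comp_assoc.
  unfold Pcp. rewrite copair_inj1. reflexivity.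
Qed.

Lemma form_sum_inj2 (M1 M2 : C) (psi1 : Hom M1 (Pobj D M1))
  (psi2 : Hom M2 (Pobj D M2)) :
  form_sum Z CP psi1 psi2 \o inj2 CP M1 M2 = Phom D (cproj2 Z CP M1 M2) \o psi2.
Proof.
  unfold form_sum. rewrite <- comp_assoc, cpmap_inj2, comp_assoc.
  unfold Pcp. rewrite copair_inj2. reflexivity.
Qed.

Lemma form_sum_iso (M1 M2 : C) (psi1 : Hom M1 (Pobj D M1))
  (psi2 : Hom M2 (Pobj D M2)) :
  additive_duality Z CP D -> is_iso psi1 -> is_iso psi2 ->
  is_iso (form_sum Z CP psi1 psi2).
Proof.
  intros Hadd H1 H2. apply iso_comp; [apply cpmap_iso; assumption | apply Hadd].
Qed.

Lemma isotropic_of_kernel (M K U : C) (psi : Hom M (Pobj D M)) (k : Hom K M)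
  (u : Hom U K) :
  infl E k -> infl E u -> is_kernel Z k (Phom D (k \o u) \o psi) ->
  isotropic E psi (k \o u).
Proof.
  intros Hk Hu Hker. split; [exact (infl_comp Hu Hk) |]. split.
  - destruct Hker as [Hk0 _]. rewrite comp_assoc, Hk0. apply zmor_comp.
  - exists K, k, u. auto.
Qed.

Lemma summand_isotropic (M Mk U Uk K Kk : C) (psi : Hom M (Pobj D M))
  (psik : Hom Mk (Pobj D Mk)) (sigma : Hom Mk M) (rho : Hom M Mk) (i : Hom U M)
  (k : Hom K M) (kk : Hom Kk Mk) (s : Hom Kk K) (p : Hom K Kk) (uk : Hom Uk Kk)
  (r : Hom U Uk) (r' : Hom Uk U) :
  rho \o sigma = cid Mk -> psi \o sigma = Phom D rho \o psik ->
  k \o s = sigma \o kk -> rho \o k = kk \o p -> infl E kk -> infl E uk ->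
  is_kernel Z k (Phom D i \o psi) ->
  rho \o i = kk \o uk \o r -> r \o r' = cid Uk -> isotropic E psik (kk \o uk).
Proof.
  intros Hret Hform Hs Hp Hkk Huk Hker Hi Hr.
  apply isotropic_of_kernel; [exact Hkk | exact Huk |].
  apply (kernel_cancel_monic (L := Phom D r)).
  - apply (monic_of_retraction (r := Phom D r')). rewrite <- P_comp, Hr. apply P_id.
  - replace (Phom D r \o (Phom D (kk \o uk) \o psik)) with (Phom D i \o psi \o sigma).
    + exact (kernel_summand Hret (infl_monic Hkk) Hs Hp Hker).
    + rewrite <- comp_assoc, Hform, comp_assoc, <- P_comp, Hi, P_comp, comp_assoc.
      reflexivity.
Qed.

Lemma isotropic_components (M1 M2 K1 K2 U1 U2 U : C) (psi1 : Hom M1 (Pobj D M1))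
  (psi2 : Hom M2 (Pobj D M2)) (k1 : Hom K1 M1) (k2 : Hom K2 M2) (u1 : Hom U1 K1)
  (u2 : Hom U2 K2) (h : Hom U (cp CP U1 U2)) :
  infl E k1 -> infl E k2 -> infl E u1 -> infl E u2 -> is_iso h ->
  is_kernel Z (cpmap CP k1 k2)
    (Phom D (cpmap CP (k1 \o u1) (k2 \o u2) \o h) \o form_sum Z CP psi1 psi2) ->
  isotropic E psi1 (k1 \o u1) /\ isotropic E psi2 (k2 \o u2).
Proof.
  intros Hk1 Hk2 Hu1 Hu2 [h' [_ Hhh']] Hker. split.
  - apply (summand_isotropic (cproj1_inj1 M1 M2) (form_sum_inj1 psi1 psi2)
      (cpmap_inj1 k1 k2) (cproj1_cpmap k1 k2) Hk1 Hu1 Hker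
      (r := cproj1 Z CP U1 U2 \o h) (r' := h' \o inj1 CP U1 U2)).
    + rewrite (comp_assoc (k1 \o u1)), <- (cproj1_cpmap (k1 \o u1) (k2 \o u2)).
      apply comp_assoc.
    + rewrite <- comp_assoc, (comp_assoc h h'), Hhh', comp_id_l. apply cproj1_inj1.
  - apply (summand_isotropic (cproj2_inj2 M1 M2) (form_sum_inj2 psi1 psi2)
      (cpmap_inj2 k1 k2) (cproj2_cpmap k1 k2) Hk2 Hu2 Hker
      (r := cproj2 Z CP U1 U2 \o h) (r' := h' \o inj2 CP U1 U2)).
    + rewrite (comp_assoc (k2 \o u2)), <- (cproj2_cpmap (k1 \o u1) (k2 \o u2)).
      apply comp_assoc.
    + rewrite <- comp_assoc, (comp_assoc h h'), Hhh', comp_id_l. apply cproj2_inj2.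
Qed.

End ProtoExactDuality.

Theorem lemma1p7 (C : Cat) (Z : ZeroObj C) (E : ProtoExact Z)
  (CP : Coproducts C) (D : Duality C)
  (Hexact : exact_duality E D) (Hadd : additive_duality Z CP D)
  (Hcomb : combinatorial CP E)
  (M1 M2 : C) (psi1 : Hom M1 (Pobj D M1)) (psi2 : Hom M2 (Pobj D M2))
  (Hpsi1 : symmetric_form psi1) (Hpsi2 : symmetric_form psi2)
  (U : C) (i : Hom U (cp CP M1 M2))
  (Hi : isotropic E (form_sum Z CP psi1 psi2) i) :
  exists (U1 U2 : C) (i1 : Hom U1 M1) (i2 : Hom U2 M2)
         (f : Hom U (cp CP U1 U2)),
    isotropic E psi1 i1 /\ isotropic E psi2 i2 /\
    is_iso f /\ cpmap CP i1 i2 \o f = i.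
Proof.
  destruct Hi as (Hinfl & _ & Uperp & k & u & Hker & Hku & Hu).
  destruct Hexact as (_ & Hinfl_defl & _).
  assert (HQ : defl E (Phom D i \o form_sum Z CP psi1 psi2)).
  { apply defl_comp.
    - apply (defl_iso E), form_sum_iso; [exact Hadd | apply Hpsi1 | apply Hpsi2].
    - apply Hinfl_defl, Hinfl. }
  destruct (Hcomb _ _ _ k (kernel_infl HQ Hker))
    as (K1 & K2 & k1 & k2 & g & Hk1 & Hk2 & Hg & Hkg).
  destruct (Hcomb _ _ _ (g \o u) (infl_comp Hu (infl_iso E Hg)))
    as (U1 & U2 & u1 & u2 & h & Hu1 & Hu2 & Hh & Hugh).
  assert (Hdecomp : cpmap CP (k1 \o u1) (k2 \o u2) \o h = i).
  { rewrite <- cpmap_comp, <- comp_assoc, Hugh, comp_assoc, Hkg. exact Hku. }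
  assert (Hker' : is_kernel Z (cpmap CP k1 k2) (Phom D i \o form_sum Z CP psi1 psi2)).
  { destruct Hg as [g' [Hg'g Hgg']].
    replace (cpmap CP k1 k2) with (k \o g').
    - apply kernel_comp_iso; [exact Hker | exists g; split; assumption].
    - rewrite <- Hkg, <- comp_assoc, Hgg'. apply comp_id_r. }
  rewrite <- Hdecomp in Hker'.
  destruct (isotropic_components Hk1 Hk2 Hu1 Hu2 Hh Hker') as [Hiso1 Hiso2].
  exists U1, U2, (k1 \o u1), (k2 \o u2), h. auto.
Qed.
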